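(* Let $(Z,d)$ be a distance space, $X\cup Y=Z$ a cover, $A:=X\cap Y$, and $r\in[0,\infty)$. Assume there is $v\in A$ such that for all $x\in X\setminus A$ and $y\in Y\setminus A$ with $d(x,y)\le r$ one has $d(x,v)\le r$ and $d(y,v)\le r$. Fix such a $v$ and assume in addition that one of the following holds: (1) for every $x\in X\setminus A$ and $y\in Y\setminus A$ with $d(x,y)\le r$, every $w\in A$ with $d(w,x)\le r$ and $d(w,y)\le r$ satisfies $d(v,w)\le r$; (2) $\mathrm{diam}(A)\le r$; (3) $A=\{v\}$. Then the inclusion $\mathrm{VR}_r(X)\cup\mathrm{VR}_r(Y)\hookrightarrow\mathrm{VR}_r(Z)$ is a weak equivalence.
   Context: A distance on a set $Z$ is a function $d\colon Z\times Z\to[0,\infty]$ with $d(x,y)=d(y,x)$ and $d(x,x)=0$ (no triangle inequality assumed). $\mathrm{diam}(A)$ is the supremum of $d(a,b)$ over $a,b\in A$ (the maximum for finite $A$). For $B\subset Z$ and $r\in[0,\infty)$, $\mathrm{VR}_r(B)$ is the simplicial complex of all finite nonempty $\sigma\subset B$ with $d(x,y)\le r$ for all $x,y\in\sigma$. Homotopical notions refer to geometric realizations. *)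

From HB Require Import structures.
From mathcomp Require Import all_boot all_order all_algebra.
From mathcomp Require Import all_classical all_reals all_analysis.

Unset Printing Implicit Defensive.

Import Order.TTheory GRing.Theory Num.Theory.
Import numFieldNormedType.Exports.
Local Open Scope classical_set_scope.
Local Open Scope ring_scope.

Section VR.
Context {R : realType} {Z : choiceType}.

Definition diam (d : Z -> Z -> \bar R) (A : set Z) : \bar R :=
  ereal_sup [set d p.1 p.2 | p in A `*` A].

Definition VR (d : Z -> Z -> \bar R) (r : R) (B : set Z) : set (set Z) :=
  [set s | [/\ finite_set s, s !=set0, s `<=` B &
            forall x y, s x -> s y -> (d x y <= r%:E)%E]].
End VR.

Section Realization.
Context {R : realType}.

(** Geometric realization |K| of a simplicial complex K (set of simplices,
    each a finite subset of the vertex type V): barycentric-coordinate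
    functions t : V -> R, nonnegative, whose support is a simplex of K and
    whose coordinates sum to 1. *)
Definition supp {V : choiceType} (t : V -> R) : set V := [set v | t v != 0].

Definition realization {V : choiceType} (K : set (set V)) : set (V -> R) :=
  [set t | [/\ forall v, 0 <= t v, K (supp t) &
               \sum_(v \in supp t) t v = 1]].

Definition closed_simplex {V : choiceType} (K : set (set V)) (s : set V)
  : set (V -> R) := [set t | realization K t /\ supp t `<=` s].

(** Open sets of |K| for the standard (coherent / weak) topology: U meets
    every closed simplex |s| (s in K) in a relatively open subset of |s|,
    where |s| carries the Euclidean (= pointwise, since s is finite)
    topology inherited from V -> R.  The open subsets of |K| are the
    U `&` realization K with U coherently open. *)
Definition wopen {V : choiceType} (K : set (set V)) (U : set (V -> R)) : Prop :=
  forall s, K s -> exists W : set {ptws V -> R},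
      open W /\ W `&` closed_simplex K s = U `&` closed_simplex K s.

Definition wcont {D : topologicalType} {V : choiceType} (C : set D)
  (K : set (set V)) (g : D -> V -> R) : Prop :=
  (forall p, C p -> realization K (g p)) /\
  forall U, wopen K U -> exists O : set D, open O /\ O `&` C = (g @^-1` U) `&` C.

(** The cube I^n in R^n and its boundary (empty for n = 0). *)
Definition cube (n : nat) : set 'rV[R]_n :=
  [set p | forall i, 0 <= p ord0 i <= 1].
Definition cube_bd (n : nat) : set 'rV[R]_n :=
  [set p | exists i, p ord0 i = 0 \/ p ord0 i = 1].

(** Representatives of pi_n(|K|, x): maps (I^n, bd I^n) -> (|K|, x).
    For n = 0 these are just points of |K|. *)
Definition sph_map {V : choiceType} (K : set (set V)) (n : nat) (x : V -> R)
  (g : 'rV[R]_n -> V -> R) : Prop :=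
  wcont (cube n) K g /\ forall p, cube_bd n p -> g p = x.

(** Homotopy rel boundary between two such maps (for n = 0: a path). *)
Definition htpc {V : choiceType} (K : set (set V)) (n : nat) (x : V -> R)
  (g0 g1 : 'rV[R]_n -> V -> R) : Prop :=
  exists H : R * 'rV[R]_n -> V -> R,
    [/\ @wcont (R * 'rV[R]_n)%type V ([set s : R | 0 <= s <= 1] `*` cube n) K H,
        forall p, cube n p -> H (0, p) = g0 p,
        forall p, cube n p -> H (1, p) = g1 p &
        forall s p, 0 <= s <= 1 -> cube_bd n p -> H (s, p) = x].

(** f : |K| -> |L| is a weak homotopy equivalence: it is continuous, it is
    surjective on path components (pi_0, including the case |K| empty), and
    for every n and every basepoint x in |K| the induced map
    pi_n(|K|, x) -> pi_n(|L|, f x) is bijective (for n = 0 this is the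
    bijection on path components). *)
Definition weak_equiv {V W : choiceType} (K : set (set V)) (L : set (set W))
  (f : (V -> R) -> (W -> R)) : Prop :=
  [/\ forall t, realization K t -> realization L (f t),
      forall U, wopen L U -> wopen K (f @^-1` U),
      forall y, realization L y -> exists x, realization K x &
      forall n x, realization K x ->
        (forall h, sph_map L n (f x) h ->
           exists g, sph_map K n x g /\ htpc L n (f x) (f \o g) h) /\
        (forall g0 g1, sph_map K n x g0 -> sph_map K n x g1 ->
           htpc L n (f x) (f \o g0) (f \o g1) -> htpc K n x g0 g1)].

End Realization.

From Pilot Require Import Defs.
From HB Require Import structures.
From mathcomp Require Import all_boot all_order all_algebra.
From mathcomp Require Import all_classical all_reals all_analysis.
From mathcomp Require Import finmap.
Import Order.TTheory GRing.Theory Num.Theory.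
Import numFieldNormedType.Exports.
Local Open Scope classical_set_scope.
Local Open Scope ring_scope.

(* The inclusion is a deformation retraction.  For a point t of |VR_r(Z)|
   let a and b be the masses of t on X \ Y and on Y \ X; the retraction
   removes mass min(a, b) from each of the two sides, proportionally to t, and
   puts 2 min(a, b) on v.  The image is supported in X or in Y.  When supp t
   meets both X \ Y and Y \ X, the hypotheses on v (cases (2) and (3) imply
   case (1)) give d(z, v) <= r for every z in supp t, so supp t + {v} is a
   simplex of VR_r(Z) containing both t and its image: the straight-line
   homotopy to the retraction stays in |VR_r(Z)| and fixes
   |VR_r(X) u VR_r(Y)|.  On a fixed simplex both maps are given by formulas
   continuous for the product topology, which is what continuity for the
   coherent topology requires; the retraction then induces inverse maps on
   all homotopy groups. *)

(** * Coherent topology of geometric realizations *)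

Section CoherentTopology.
Context {R : realType}.

Lemma closed_simplex_supp {V : choiceType} (K : set (set V)) (t : V -> R) :
  closed_simplex K (supp t) t <-> realization K t.
Proof. by split=> [[]//|tK]; split. Qed.

Lemma wcont_comp {D : topologicalType} {V W : choiceType} (C : set D)
    (K : set (set V)) (L : set (set W)) (F : (V -> R) -> W -> R)
    (h : D -> V -> R) :
  (forall t, realization K t -> realization L (F t)) ->
  (forall U, Defs.wopen L U -> Defs.wopen K (F @^-1` U)) ->
  wcont C K h -> wcont C L (F \o h).
Proof.
move=> FL Fopen [hK hopen]; split=> [p Cp|U UL]; first exact/FL/hK.
have [Ob [oOb EOb]] := hopen _ (Fopen _ UL); by exists Ob.
Qed.

Lemma wcont_continuous_comp {D D' : topologicalType} {V : choiceType}
    (C : set D) (C' : set D') (f : D' -> D) (K : set (set V))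
    (g : D -> V -> R) :
  continuous f -> (forall p, C' p -> C (f p)) -> wcont C K g ->
  wcont C' K (g \o f).
Proof.
move=> fcont fC [gK gopen]; split=> [p C'p|U UK]; first exact/gK/fC.
have [Ob [oOb EOb]] := gopen _ UK; exists (f @^-1` Ob); split.
  by apply: open_comp => // p _; exact: fcont.
apply/seteqP; split=> p [Obp C'p]; split=> //.
  by have [] : ((g @^-1` U) `&` C) (f p) by rewrite -EOb; split=> //; exact: fC.
by have [] : (Ob `&` C) (f p) by rewrite EOb; split=> //; exact: fC.
Qed.

Section Gluing.
Context {V : choiceType}.

Definition off_simplex (s : set V) : set {ptws V -> R} :=
  [set f | exists z, ~ s z /\ f z != 0].

Lemma off_simplexP (s : set V) (f : V -> R) : off_simplex s f <-> ~ supp f `<=` s.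
Proof.
split=> [[z [sz fz]] fs|fs]; first exact/sz/fs.
apply: contrapT => off; apply: fs => z fz; apply: contrapT => sz.
by apply: off; exists z.
Qed.

Lemma open_off_simplex (s : set V) : open (off_simplex s).
Proof.
have -> : off_simplex s = \bigcup_(z in ~` s) (proj z @^-1` [set x : R | x != 0]).
  by apply/seteqP; split=> f [z]; [case=> ? ?|move=> ? ?]; exists z.
apply: bigcup_open => z _; apply: open_comp; last exact: open_neq.
by move=> f _; exact: proj_continuous.
Qed.

Lemma wopen_trace {L : set (set V)} {U W : set (V -> R)} {s : set V} {q : V -> R} :
  W `&` closed_simplex L s = U `&` closed_simplex L s ->
  realization L q -> supp q `<=` s -> W q <-> U q.
Proof.
move=> EW qL qs; split=> [Wq|Uq].
  by have [] : (U `&` closed_simplex L s) q by rewrite -EW.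
by have [] : (W `&` closed_simplex L s) q by rewrite EW.
Qed.

(* If W1 and W2 cut out the same sets as U on |s1| and |s2|, the glued open set
   cuts out the same set as U on |s1| u |s2|: outside |s2| only W1 is
   relevant, outside |s1| only W2. *)
Definition glue (W1 W2 : set {ptws V -> R}) (s1 s2 : set V) :=
  (W1 `&` W2) `|` (W1 `&` off_simplex s2) `|` (W2 `&` off_simplex s1).

Lemma glueC W1 W2 s1 s2 : glue W1 W2 s1 s2 = glue W2 W1 s2 s1.
Proof. by rewrite /glue setUAC [W1 `&` W2]setIC. Qed.

Lemma open_glue W1 W2 s1 s2 : open W1 -> open W2 -> open (glue W1 W2 s1 s2).
Proof.
by move=> oW1 oW2; apply: openU; [apply: openU|]; apply: openI => //;
  exact: open_off_simplex.
Qed.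

Lemma glue_trace {L : set (set V)} {U : set (V -> R)} {W1 W2 s1 s2 q} :
  W1 `&` closed_simplex L s1 = U `&` closed_simplex L s1 ->
  W2 `&` closed_simplex L s2 = U `&` closed_simplex L s2 ->
  realization L q -> supp q `<=` s1 -> glue W1 W2 s1 s2 q <-> U q.
Proof.
move=> EW1 EW2 qL qs1; have W1U := wopen_trace EW1 qL qs1.
split=> [[[[W1q _]|[W1q _]]|[_ /off_simplexP//]]|Uq]; [exact/W1U|exact/W1U|].
have [qs2|/off_simplexP nqs2] := pselect (supp q `<=` s2).
  by left; left; split; [exact/W1U|exact/(wopen_trace EW2 qL qs2)].
by left; right; split=> //; exact/W1U.
Qed.

Lemma wopen_preimage {W : choiceType} (K : set (set W)) (L : set (set V))
    (F : (W -> R) -> V -> R) :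
  (forall t, realization K t -> realization L (F t)) ->
  (forall s, K s -> exists s1 s2 (G : {ptws W -> R} -> {ptws V -> R}),
     [/\ L s1, L s2, continuous G &
      forall t, closed_simplex K s t ->
        G t = F t /\ (supp (F t) `<=` s1 \/ supp (F t) `<=` s2)]) ->
  forall U, Defs.wopen L U -> Defs.wopen K (F @^-1` U).
Proof.
move=> FL Fpieces U UL s Ks.
have [s1 [s2 [G [Ls1 Ls2 Gcont GF]]]] := Fpieces s Ks.
have [W1 [oW1 EW1]] := UL _ Ls1; have [W2 [oW2 EW2]] := UL _ Ls2.
exists (G @^-1` glue W1 W2 s1 s2); split.
  by apply: open_comp; [move=> f _; exact: Gcont|exact: open_glue].
apply/seteqP; split=> t [Ht st]; split=> //; move: Ht; rewrite /preimage /=;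
  have [-> [qs1|qs2]] := GF _ st; have qL := FL _ (proj1 st).
- exact: (glue_trace EW1 EW2 qL qs1).1.
- by rewrite glueC; exact: (glue_trace EW2 EW1 qL qs2).1.
- exact: (glue_trace EW1 EW2 qL qs1).2.
- by rewrite glueC; exact: (glue_trace EW2 EW1 qL qs2).2.
Qed.

End Gluing.

Definition simplexwise_homotopy {V : choiceType} (K : set (set V))
    (Th : R -> (V -> R) -> V -> R) :=
  forall s, K s -> exists tau (Ts : R * {ptws V -> R} -> {ptws V -> R}),
    [/\ K tau, continuous Ts & forall u t, 0 <= u <= 1 -> closed_simplex K s t ->
      Ts (u, t) = Th u t /\ closed_simplex K tau (Th u t)].

Section Homotopy.
Context {V : choiceType} {K : set (set V)} {Th : R -> (V -> R) -> V -> R}.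
Hypothesis Th_simplexwise : simplexwise_homotopy K Th.

Lemma homotopy_realization u t :
  0 <= u <= 1 -> realization K t -> realization K (Th u t).
Proof.
move=> u01 tK; have [_ Ks _] := tK.
have [tau [Ts [_ _ HTs]]] := Th_simplexwise _ Ks.
by have [_ []] := HTs u t u01 (proj2 (closed_simplex_supp K t) tK).
Qed.

Lemma homotopy_near {U : set (V -> R)} {t : V -> R} {s0 : R} :
  Defs.wopen K U -> realization K t -> 0 <= s0 <= 1 -> U (Th s0 t) ->
  exists2 e, 0 < e & forall u, 0 <= u <= 1 -> `|s0 - u| <= e -> U (Th u t).
Proof.
move=> UK tK s01 Ut; have ts := proj2 (closed_simplex_supp K t) tK.
have [_ Ks _] := tK; have [tau [Ts [Ktau Tcont HTs]]] := Th_simplexwise _ Ks.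
have [W [oW EW]] := UK _ Ktau.
have WTs u : 0 <= u <= 1 -> W (Ts (u, t)) <-> U (Th u t).
  move=> u01; have [-> [ThK Thtau]] := HTs u t u01 ts.
  exact: wopen_trace EW ThK Thtau.
have : nbhs ((s0, t : {ptws V -> R}) : R * {ptws V -> R}) (Ts @^-1` W).
  by apply: Tcont; apply: open_nbhs_nbhs; split=> //; exact/WTs.
case=> -[A B] /= [/nbhs_ballP [e /= e0 eA] Bt] AB.
exists (e / 2); first by rewrite divr_gt0.
move=> u u01 su; apply/WTs => //; apply: (AB (u, t)); split=> /=.
  apply: eA; rewrite /ball /=; apply: (le_lt_trans su).
  by rewrite ltr_pdivrMr // ltr_pMr // ltr1n.
exact: nbhs_singleton Bt.
Qed.

Lemma wopen_homotopy_tube {U : set (V -> R)} (s0 e : R) : Defs.wopen K U ->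
  Defs.wopen K [set t | forall u, 0 <= u <= 1 -> `|s0 - u| <= e -> U (Th u t)].
Proof.
move=> UK s Ks; have [tau [Ts [Ktau Tcont HTs]]] := Th_simplexwise _ Ks.
have [W [oW EW]] := UK _ Ktau.
pose J := `[(0:R), 1] `&` closed_ball_ Num.norm s0 e.
have JP u : J u <-> 0 <= u <= 1 /\ `|s0 - u| <= e.
  by rewrite /J /closed_ball_ /= in_itv.
have cJ : compact J.
  by apply: compact_closedI; [exact: segment_compact|exact: closed_closed_ball_].
(* Tube lemma over the compact parameter set J. *)
exists [set t : {ptws V -> R} | forall u, J u -> W (Ts (u, t))]; split.
  rewrite openE => t Ht.
  move/compact_near_coveringP: cJ => /(_ _ (nbhs t) (fun i x => W (Ts (x, i)))).
  apply=> // x Jx.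
  have : nbhs ((x, t) : R * {ptws V -> R}) (Ts @^-1` W).
    by apply: Tcont; apply: open_nbhs_nbhs; split=> //; exact: Ht.
  case=> -[A B] /= [nA nB] AB; exists (A, B) => // -[a b] [Aa Bb].
  exact: (AB (a, b)).
have WTs u t : J u -> closed_simplex K s t -> W (Ts (u, t)) <-> U (Th u t).
  move=> /JP[u01 _] st; have [-> [ThK Thtau]] := HTs u t u01 st.
  exact: wopen_trace EW ThK Thtau.
apply/seteqP; split=> t [Ht st]; split=> //.
  move=> u u01 su; have Ju : J u by exact/JP.
  exact/(WTs u t Ju st)/Ht.
by move=> u Ju; apply/(WTs u t Ju st); case/JP: Ju; exact: Ht.
Qed.

Lemma wcont_homotopy {D : topologicalType} (C : set D) (sf : D -> R)
    (h : D -> V -> R) :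
  continuous sf -> (forall p, C p -> 0 <= sf p <= 1) -> wcont C K h ->
  wcont C K (fun p => Th (sf p) (h p)).
Proof.
move=> sfcont sf01 [hK hopen]; split=> [p Cp|U UK].
  exact: homotopy_realization (sf01 _ Cp) (hK _ Cp).
pose G p := Th (sf p) (h p).
exists (\bigcup_(B in [set B | open B /\ B `&` C `<=` G @^-1` U]) B); split.
  by apply: bigcup_open => ? [].
apply/seteqP; split=> p; first by case=> [[B [_ sub] Bp] Cp]; split=> //; exact: sub.
case=> Up Cp; split=> //.
have [e e0 He] := homotopy_near UK (hK _ Cp) (sf01 _ Cp) Up.
pose tube := [set t | forall u, 0 <= u <= 1 -> `|sf p - u| <= e -> U (Th u t)].
have [Ob [oOb EOb]] := hopen tube (wopen_homotopy_tube (sf p) e UK).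
exists (Ob `&` sf @^-1` ball (sf p) e); last first.
  split; last exact: ballxx.
  by have [] : (Ob `&` C) p by rewrite EOb; split=> //; exact: He.
split.
  by apply: openI => //; apply: open_comp; [move=> x _; exact: sfcont|exact: ball_open].
move=> q [[Obq bq] Cq]; have [Hq _] : (h @^-1` tube `&` C) q by rewrite -EOb.
by apply: Hq; [exact: sf01|apply: ltW; move: bq; rewrite /ball /=].
Qed.

End Homotopy.

Lemma supp_neq0 {V : choiceType} {t : V -> R} :
  \sum_(z \in supp t) t z = 1 -> supp t !=set0.
Proof.
move=> t1; apply/set0P/eqP => t0; move: t1; rewrite t0 fsbig_set0 => /eqP.
by rewrite eq_sym oner_eq0.
Qed.

Section DeformationRetraction.
Context {V : choiceType} {K L : set (set V)} {phi : (V -> R) -> V -> R}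
  {Th : R -> (V -> R) -> V -> R}.
Hypotheses (KL : K `<=` L)
  (K_down : forall s s', K s -> s' `<=` s -> s' !=set0 -> K s')
  (phiK : forall t, realization L t -> realization K (phi t))
  (phi_wopen : forall U, Defs.wopen K U -> Defs.wopen L (phi @^-1` U))
  (phi_id : forall t, realization K t -> phi t = t)
  (Th_simplexwise : simplexwise_homotopy L Th)
  (Th0 : forall t, Th 0 t = t) (Th1 : forall t, Th 1 t = phi t)
  (Th_id : forall u t, realization K t -> Th u t = t).

Lemma realization_sub {t : V -> R} : realization K t -> realization L t.
Proof. by case=> t0 Ks t1; split=> //; exact: KL. Qed.

Lemma closed_simplex_sub s :
  K s -> closed_simplex L s = closed_simplex K s :> set (V -> R).
Proof.
move=> Ks; apply/seteqP; split=> t [tL ts]; split=> //.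
  by case: tL => t0 _ t1; split=> //; exact: K_down _ _ Ks ts (supp_neq0 t1).
exact: realization_sub.
Qed.

Lemma wopen_sub (U : set (V -> R)) : Defs.wopen L U -> Defs.wopen K U.
Proof.
move=> UL s Ks; have [W [oW EW]] := UL _ (KL _ Ks).
by exists W; rewrite -closed_simplex_sub.
Qed.

Lemma sph_map_retract n x h :
  realization K x -> sph_map L n x h -> sph_map K n x (phi \o h).
Proof.
move=> xK [hw hb]; split; first exact: wcont_comp phiK phi_wopen hw.
by move=> p bp /=; rewrite hb // phi_id.
Qed.

Lemma htpc_comp_retract n x h :
  realization K x -> sph_map L n x h -> htpc L n x (phi \o h) h.
Proof.
move=> xK [hw hb].
have hw2 : wcont ([set s : R | 0 <= s <= 1] `*` cube n) L (fun q => h q.2).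
  apply: (wcont_continuous_comp _ _ snd) hw => [q|[s p] []//].
  exact: cvg_snd.
exists (fun q : R * 'rV[R]_n => Th (1 - q.1) (h q.2)); split.
- apply: (wcont_homotopy Th_simplexwise) hw2.
  + by move=> q; apply: cvgB; [exact: cvg_cst|exact: cvg_fst].
  + by move=> [s p] [/= /andP[s0 s1] _]; rewrite subr_ge0 s1 lerBlDr lerDl s0.
- by move=> p _ /=; rewrite subr0 Th1.
- by move=> p _ /=; rewrite subrr Th0.
- by move=> s p _ bp /=; rewrite hb // Th_id.
Qed.

Lemma htpc_retract n (x : V -> R) g0 g1 : realization K x ->
  sph_map K n x g0 -> sph_map K n x g1 -> htpc L n x g0 g1 -> htpc K n x g0 g1.
Proof.
move=> xK [[g0K _] _] [[g1K _] _] [G [Gw G0 G1 Gb]].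
exists (phi \o G); split.
- exact: wcont_comp phiK phi_wopen Gw.
- by move=> p cp /=; rewrite G0 // phi_id //; exact: g0K.
- by move=> p cp /=; rewrite G1 // phi_id //; exact: g1K.
- by move=> s p s01 bp /=; rewrite Gb // phi_id.
Qed.

Lemma weak_equiv_retract : weak_equiv K L (@id (V -> R)).
Proof.
split=> [t|U /wopen_sub//|y yL|n x xK]; first exact: realization_sub.
  by exists (phi y); exact: phiK.
split=> [h hL|g0 g1 g0K g1K]; last exact: htpc_retract.
by exists (phi \o h); split; [exact: sph_map_retract|exact: htpc_comp_retract].
Qed.

End DeformationRetraction.

End CoherentTopology.

(** * Moving mass onto the apex v *)

Section Share.
Context {R : realType}.

(* [c * min(a, b) / a] for [0 <= c <= a], clipped so as to be continuous in
   [(c, a, b)] everywhere; it tends to 0 with [a]. *)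
Definition share (c a b : R) : R :=
  Num.min (Num.max c 0) (Num.max a 0) *
  (Num.min (Num.max a 0) (Num.max b 0) / Num.max a 0).

Lemma share_ge0_le c a b : 0 <= share c a b <= Num.max a 0.
Proof.
rewrite /share; set a' := Num.max a 0; set c' := Num.min _ _.
have a'0 : 0 <= a' by rewrite le_max lexx orbT.
have c'0 : 0 <= c' by rewrite le_min a'0 le_max lexx orbT.
have c'a' : c' <= a' by rewrite ge_min lexx orbT.
have [->|a'n0] := eqVneq a' 0; first by rewrite invr0 !mulr0 lexx.
have a'p : 0 < a' by rewrite lt_def a'n0.
have q0 : 0 <= Num.min a' (Num.max b 0) / a'.
  by rewrite divr_ge0 // le_min a'0 le_max lexx orbT.
have q1 : Num.min a' (Num.max b 0) / a' <= 1.
  by rewrite ler_pdivrMr // mul1r ge_min lexx.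
rewrite mulr_ge0 //=; apply: le_trans c'a'.
by rewrite -[leRHS]mulr1 ler_wpM2l.
Qed.

Lemma share_eq c a b : 0 <= c <= a -> 0 <= b -> share c a b = c * (Num.min a b / a).
Proof.
case/andP=> c0 ca b0; have a0 := le_trans c0 ca.
by rewrite /share (max_l c0) (max_l a0) (max_l b0) (min_l ca).
Qed.

Lemma share_min0 c a b : 0 <= a -> 0 <= b -> Num.min a b = 0 -> share c a b = 0.
Proof. by move=> a0 b0 ab0; rewrite /share (max_l a0) (max_l b0) ab0 mul0r mulr0. Qed.

Lemma share0 a b : share 0 a b = 0.
Proof. by rewrite /share maxxx min_l ?mul0r // le_max lexx orbT. Qed.

Lemma share_full c a b : 0 <= c <= a -> a <= b -> share c a b = c.
Proof.
move=> /andP[c0 ca] ab; rewrite share_eq ?c0 ?ca ?(le_trans (le_trans c0 ca) ab) //.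
rewrite (min_l ab); have [a0|an0] := eqVneq a 0; last by rewrite divff ?mulr1.
rewrite a0 in ca; have -> : c = 0 by apply/eqP; rewrite eq_le ca c0.
by rewrite mul0r.
Qed.

Lemma min_divl_le1 (a b : R) : 0 <= a -> Num.min a b / a <= 1.
Proof.
move=> a0; have [->|an0] := eqVneq a 0; first by rewrite invr0 mulr0 ler01.
by rewrite ler_pdivrMr ?lt_def ?an0 // mul1r ge_min lexx.
Qed.

Lemma mul_min_divl (a b : R) : 0 <= a -> 0 <= b -> a * (Num.min a b / a) = Num.min a b.
Proof.
move=> a0 b0; have [->|an0] := eqVneq a 0; last by rewrite mulrCA divff ?mulr1.
by rewrite min_l // mul0r.
Qed.

Lemma continuous_share {T : topologicalType} (f g h : T -> R) :
  continuous f -> continuous g -> continuous h ->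
  continuous (fun x => share (f x) (g x) (h x)).
Proof.
have cmax0 (k : T -> R) : continuous k -> continuous (fun y => Num.max (k y) 0).
  by move=> ck; apply: max_fun_continuous => // y; exact: cvg_cst.
move=> /cmax0 cf /cmax0 cg /cmax0 ch x.
have [g0|gn0] := eqVneq (Num.max (g x) 0) 0.
  rewrite /continuous_at {2}/share g0 invr0 !mulr0.
  apply: (@squeeze_cvgr _ _ _ _ (fun=> 0) (fun y => Num.max (g y) 0)).
  - by near=> y; exact: share_ge0_le.
  - exact: cvg_cst.
  - by have := cg x; rewrite /continuous_at g0.
apply: cvgM; first exact: (min_fun_continuous cf cg).
by apply: cvgM; [exact: (min_fun_continuous cg ch)|exact: (cvgV gn0 (cg x))].
Unshelve. all: end_near. Qed.

End Share.

Section Transfer.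
Context {R : realType} {Z : choiceType} (X Y : set Z) (v : Z).
Hypotheses (cover : X `|` Y = setT) (vXY : (X `&` Y) v).

Definition mass (P : set Z) (l : seq Z) (t : Z -> R) : R :=
  \sum_(z <- l | `[< P z >]) t z.

(* Takes the mass [min a b] off [X `\` Y] and off [Y `\` X], in proportion to
   [t] when [a] and [b] are the masses of [t] there, and puts it on [v]. *)
Definition transfer (a b : R) (t : Z -> R) (z : Z) : R :=
  t z - (if `[< (X `\` Y) z >] then share (t z) a b else 0)
      - (if `[< (Y `\` X) z >] then share (t z) b a else 0)
      + (if z == v then Num.min a b *+ 2 else 0).

Lemma setD_neqv {A B : set Z} {z} : B v -> (A `\` B) z -> z != v.
Proof. by move=> Bv [_ nBz]; apply/eqP => zv; apply: nBz; rewrite zv. Qed.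

Lemma notX_setDYX {z} : ~ X z -> (Y `\` X) z.
Proof. by move=> nXz; have [//|Yz] : (X `|` Y) z by rewrite cover. Qed.

Lemma notY_setDXY {z} : ~ Y z -> (X `\` Y) z.
Proof. by move=> nYz; have [Xz|//] : (X `|` Y) z by rewrite cover. Qed.

Lemma continuous_transfer {T : topologicalType} (a b : T -> R) (f : T -> Z -> R) z :
  continuous a -> continuous b -> continuous (fun x => f x z) ->
  continuous (fun x => transfer (a x) (b x) (f x) z).
Proof.
move=> ca cb cf x; apply: cvgD; first apply: cvgB; first apply: cvgB.
- exact: cf.
- by case: asboolP => _; [exact: continuous_share|exact: cvg_cst].
- by case: asboolP => _; [exact: continuous_share|exact: cvg_cst].
- case: eqP => _; last exact: cvg_cst.
  by apply: cvgMn; exact: (min_fun_continuous ca cb).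
Qed.

Section OnSimplex.
Variables (l : seq Z) (t : Z -> R).
Hypotheses (l_uniq : uniq l) (t_ge0 : forall z, 0 <= t z) (t_supp : supp t `<=` [set` l]).
Let a := mass (X `\` Y) l t.
Let b := mass (Y `\` X) l t.

Lemma mass_ge0 P : 0 <= mass P l t.
Proof. exact: sumr_ge0. Qed.

Lemma le_mass P z : P z -> t z <= mass P l t.
Proof.
move=> Pz; have [->|tz] := eqVneq (t z) 0; first exact: mass_ge0.
rewrite /mass big_mkcond (bigD1_seq z) //=; last exact: t_supp.
by rewrite asboolT // lerDl; apply: sumr_ge0 => i _; case: ifP.
Qed.

Lemma share_XY z : (X `\` Y) z -> share (t z) a b = t z * (Num.min a b / a).
Proof. by move=> XYz; rewrite share_eq ?t_ge0 ?le_mass ?mass_ge0. Qed.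

Lemma share_YX z : (Y `\` X) z -> share (t z) b a = t z * (Num.min b a / b).
Proof. by move=> YXz; rewrite share_eq ?t_ge0 ?le_mass ?mass_ge0. Qed.

Lemma transfer_ge0 z : 0 <= transfer a b t z.
Proof.
rewrite /transfer; case: (asboolP ((X `\` Y) z)) => [XYz|nXYz].
  have nYXz : ~ (Y `\` X) z by case=> Yz _; case: XYz.
  rewrite (asboolF nYXz) (negPf (setD_neqv (proj2 vXY) XYz)).
  rewrite subr0 addr0 share_XY // subr_ge0 -[leRHS]mulr1 ler_wpM2l //.
  exact/min_divl_le1/mass_ge0.
case: (asboolP ((Y `\` X) z)) => [YXz|nYXz].
  rewrite (negPf (setD_neqv (proj1 vXY) YXz)) subr0 addr0 share_YX //.
  rewrite subr_ge0 -[leRHS]mulr1 ler_wpM2l //; exact/min_divl_le1/mass_ge0.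
rewrite !subr0; case: eqP => _; last by rewrite addr0.
by rewrite addr_ge0 // mulrn_wge0 // le_min !mass_ge0.
Qed.

Lemma transfer_supp z : transfer a b t z != 0 -> t z != 0 \/ z = v.
Proof.
have [tz0 H|] := eqVneq (t z) 0; last by left.
right; apply/eqP; apply: contraNT H => zv.
by rewrite /transfer (negPf zv) tz0 !share0 !if_same !subr0 addr0.
Qed.

Lemma transfer_id : Num.min a b = 0 -> transfer a b t = t.
Proof.
move=> ab0; have ba0 : Num.min b a = 0 by rewrite minC.
apply/funext => z; rewrite /transfer !share_min0 ?mass_ge0 // ab0 mul0rn.
by rewrite !if_same !subr0 addr0.
Qed.

Lemma transfer_side : supp (transfer a b t) `<=` X \/ supp (transfer a b t) `<=` Y.
Proof.
have [ba|/ltW ab] := leP b a; [left|right] => z; apply: contraPP => nz;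
  apply/negP; rewrite negbK; apply/eqP.
- have YXz := notX_setDYX nz; have nXYz : ~ (X `\` Y) z by case.
  rewrite /transfer (asboolF nXYz) asboolT // (negPf (setD_neqv (proj1 vXY) YXz)).
  by rewrite addr0 subr0 share_full ?t_ge0 ?le_mass // subrr.
- have XYz := notY_setDXY nz; have nYXz : ~ (Y `\` X) z by case.
  rewrite /transfer asboolT // (asboolF nYXz) (negPf (setD_neqv (proj2 vXY) XYz)).
  by rewrite addr0 !subr0 share_full ?t_ge0 ?le_mass // subrr.
Qed.

Lemma transfer_sum : v \in l -> \sum_(z <- l) transfer a b t z = \sum_(z <- l) t z.
Proof.
move=> vl; rewrite /transfer big_split /= !sumrB.
have -> : \sum_(z <- l) (if `[< (X `\` Y) z >] then share (t z) a b else 0) =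
    Num.min a b.
  rewrite -big_mkcond /= (eq_bigr (fun z => t z * (Num.min a b / a))).
    by rewrite -big_distrl /= mul_min_divl ?mass_ge0.
  by move=> z /asboolP; exact: share_XY.
have -> : \sum_(z <- l) (if `[< (Y `\` X) z >] then share (t z) b a else 0) =
    Num.min a b.
  rewrite -big_mkcond /= (eq_bigr (fun z => t z * (Num.min b a / b))).
    by rewrite -big_distrl /= mul_min_divl ?mass_ge0 // minC.
  by move=> z /asboolP; exact: share_YX.
have -> : \sum_(z <- l) (if z == v then Num.min a b *+ 2 else 0) = Num.min a b *+ 2.
  by rewrite (bigD1_seq v) //= eqxx big1 ?addr0 // => z /negPf ->.
by rewrite mulr2n !addrA !subrK.
Qed.

Lemma crossing_of_min_mass_gt0 : 0 < Num.min a b ->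
  (exists x, t x != 0 /\ (X `\` Y) x) /\ (exists y, t y != 0 /\ (Y `\` X) y).
Proof.
rewrite lt_min => /andP[a0 b0].
have supp_of P : 0 < mass P l t -> exists x, t x != 0 /\ P x.
  apply: contraPP => /forallNP nP; apply/negP; rewrite -leNgt le_eqVlt.
  rewrite /mass big1 ?eqxx // => z /asboolP Pz.
  by have [//|tz] := eqVneq (t z) 0; case: (nP z).
by split; apply: supp_of.
Qed.

End OnSimplex.

End Transfer.

Section Sums.
Context {R : realType} {T : choiceType}.

Lemma fsum_supp_seq (F : T -> R) (l : seq T) : uniq l -> supp F `<=` [set` l] ->
  \sum_(z \in supp F) F z = \sum_(z <- l) F z.
Proof.
move=> ul Fl; apply: fsbig_fwiden => // z [_ nFz]; apply/eqP.
by apply: contra_notT nFz.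
Qed.

Lemma mass_eq (P : set T) (l1 l2 : seq T) (t : T -> R) : uniq l1 -> uniq l2 ->
  supp t `<=` [set` l1] -> supp t `<=` [set` l2] -> mass P l1 t = mass P l2 t.
Proof.
move=> ul1 ul2 tl1 tl2; pose g z := if `[< P z >] then t z else 0.
have gt : supp g `<=` supp t.
  by move=> z; rewrite /supp /g /=; case: ifP => //; rewrite eqxx.
have mass_g l : uniq l -> supp t `<=` [set` l] -> mass P l t = \sum_(z \in supp g) g z.
  move=> ul tl; rewrite /mass big_mkcond (fsum_supp_seq g l) //.
  exact: subset_trans gt tl.
by rewrite !mass_g.
Qed.

End Sums.

Lemma ptws_continuous {R : realType} {T : topologicalType} {V : choiceType}
    (f : T -> {ptws V -> R}) :
  (forall z, continuous (fun x => f x z)) -> continuous f.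
Proof.
move=> fcont x; apply/cvg_sup => z U [? /= [[W oW <-]]] /= Wfxz /filterS; apply.
by apply: fcont; exact: open_nbhs_nbhs.
Qed.

Lemma continuous_lerp {R : realType} {T : topologicalType} (u f g : T -> R) :
  continuous u -> continuous f -> continuous g ->
  continuous (fun x => (1 - u x) * f x + u x * g x).
Proof.
move=> cu cf cg x; apply: cvgD; apply: cvgM; [|exact: cf|exact: cu|exact: cg].
by apply: cvgB; [exact: cvg_cst|exact: cu].
Qed.

Lemma continuous_mass {R : realType} {V : choiceType} (P : set V) (l : seq V) :
  continuous (fun t : {ptws V -> R} => mass P l t).
Proof.
by apply: continuous_big => [|z _]; [exact: add_continuous|exact: proj_continuous].
Qed.

(** * The retraction of VR_r(Z) onto VR_r(X) u VR_r(Y) *)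

Section VietorisRips.
Context {R : realType} {Z : choiceType} {d : Z -> Z -> \bar R} {r : R}.

Lemma VR_down {B s s' : set Z} :
  VR d r B s -> s' `<=` s -> s' !=set0 -> VR d r B s'.
Proof.
move=> [fs _ sB ds] s's s'0; split=> //; first exact: sub_finite_set fs.
  by move=> z /s's /sB.
by move=> x y /s's sx /s's sy; exact: ds.
Qed.

Lemma VRU_down {X Y s s' : set Z} : (VR d r X `|` VR d r Y) s -> s' `<=` s ->
  s' !=set0 -> (VR d r X `|` VR d r Y) s'.
Proof. by move=> [] Vs s's s'0; [left|right]; exact: VR_down Vs s's s'0. Qed.

Lemma VRU_sub {X Y : set Z} : VR d r X `|` VR d r Y `<=` VR d r setT.
Proof. by move=> s [] [fs s0 _ ds]; split. Qed.

Lemma realization_VR {t : Z -> R} : realization (VR d r setT) t ->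
  [/\ forall z, 0 <= t z, finite_set (supp t),
      forall x y, supp t x -> supp t y -> (d x y <= r%:E)%E &
      \sum_(z \in supp t) t z = 1].
Proof. by case=> t0 [fs _ _ dt] t1; split. Qed.

Lemma closed_simplex_VR (s : set Z) (t : Z -> R) : VR d r setT s ->
  (forall z, 0 <= t z) -> \sum_(z \in supp t) t z = 1 -> supp t `<=` s ->
  closed_simplex (VR d r setT) s t.
Proof.
move=> Vs t0 t1 ts; split=> //; split=> //.
by apply: VR_down Vs ts _; exact: supp_neq0.
Qed.

End VietorisRips.

Section VRRetraction.
Context {R : realType} {Z : choiceType} (d : Z -> Z -> \bar R) (r : R)
  (X Y : set Z) (v : Z).
Hypotheses (d_sym : forall x y, d x y = d y x) (d_refl : forall x, d x x = 0%E)
  (r_ge0 : 0 <= r) (cover : X `|` Y = setT) (vXY : (X `&` Y) v).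
Hypothesis close_v : forall x y, (X `\` Y) x -> (Y `\` X) y ->
  (d x y <= r%:E)%E -> (d x v <= r%:E)%E /\ (d y v <= r%:E)%E.
Hypothesis close_vw : forall x y, (X `\` Y) x -> (Y `\` X) y ->
  (d x y <= r%:E)%E -> forall w, (X `&` Y) w ->
  (d w x <= r%:E)%E -> (d w y <= r%:E)%E -> (d v w <= r%:E)%E.

Local Notation K := (VR d r X `|` VR d r Y).
Local Notation L := (VR d r setT).

Definition crossing (S : set Z) :=
  exists x y, [/\ S x, S y, (X `\` Y) x & (Y `\` X) y].

Lemma crossing_close_v {S : set Z} :
  (forall x y, S x -> S y -> (d x y <= r%:E)%E) -> crossing S ->
  forall z, S z -> (d z v <= r%:E)%E.
Proof.
move=> dS [x [y [Sx Sy XYx YXy]]] z Sz.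
have [Xz|/(notX_setDYX _ _ cover) YXz] := pselect (X z); last first.
  by have [] := close_v _ _ XYx YXz (dS _ _ Sx Sz).
have [Yz|/(notY_setDXY _ _ cover) XYz] := pselect (Y z); last first.
  by have [] := close_v _ _ XYz YXy (dS _ _ Sz Sy).
by rewrite d_sym; apply: (close_vw _ _ XYx YXy (dS _ _ Sx Sy)) => //; exact: dS.
Qed.

Lemma VR_setUv {S : set Z} : L S -> crossing S -> L (S `|` [set v]).
Proof.
move=> [fS S0 _ dS] cS; split=> //.
- by rewrite finite_setU; split=> //; exact: finite_set1.
- by exists v; right.
have dv := crossing_close_v dS cS.
move=> x y [Sx|->] [Sy|->]; [exact: dS|exact: dv|rewrite d_sym; exact: dv|].
by rewrite d_refl lee_fin.
Qed.

Lemma VR_setUvI {B S : set Z} : L S -> crossing S -> B v ->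
  VR d r B ((S `|` [set v]) `&` B).
Proof.
move=> LS cS Bv; have [fS _ _ dS] := VR_setUv LS cS; split.
- exact: finite_setIl.
- by exists v; split=> //; right.
- by move=> z [].
- by move=> x y [Sx _] [Sy _]; exact: dS.
Qed.

Lemma VR_noncrossing {S : set Z} : L S -> ~ crossing S -> K S.
Proof.
move=> [fS S0 _ dS] nc.
have [[x [Sx XYx]]|nx] := pselect (exists x, S x /\ (X `\` Y) x).
  left; split=> // y Sy; apply: contrapT => /(notX_setDYX _ _ cover) YXy.
  by apply: nc; exists x, y.
right; split=> // y Sy; apply: contrapT => /(notY_setDXY _ _ cover) XYy.
by apply: nx; exists y.
Qed.

Definition retract_on (l : seq Z) (t : Z -> R) : Z -> R :=
  transfer X Y v (mass (X `\` Y) l t) (mass (Y `\` X) l t) t.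

(* The list of vertices also contains v, where the moved mass lands. *)
Definition retract (t : Z -> R) : Z -> R :=
  retract_on (fset_set (supp t `|` [set v])) t.

Definition deform (u : R) (t : Z -> R) : Z -> R :=
  fun z => (1 - u) * t z + u * retract t z.

Section OnRealization.
Variable t : Z -> R.
Hypothesis tL : realization L t.

Let t_ge0 : forall z, 0 <= t z. Proof. by have [] := realization_VR tL. Qed.

Let lv := fset_set (supp t `|` [set v]).

Let lv_uniq : uniq lv. Proof. exact: fset_uniq. Qed.

Let in_lv : [set` lv] = supp t `|` [set v].
Proof.
have [_ ft _ _] := realization_VR tL.
by apply: fset_setK; rewrite finite_setU; split=> //; exact: finite_set1.
Qed.

Let supp_lv : supp t `<=` [set` lv]. Proof. by rewrite in_lv => z; left. Qed.

Let v_lv : v \in lv. Proof. by have : [set` lv] v by rewrite in_lv; right. Qed.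

Lemma retract_onE (l : seq Z) : uniq l -> supp t `<=` [set` l] ->
  retract_on l t = retract t.
Proof.
by move=> ul tl; rewrite /retract /retract_on !(mass_eq _ _ _ _ ul lv_uniq tl supp_lv).
Qed.

Lemma retract_ge0 z : 0 <= retract t z.
Proof. exact: transfer_ge0. Qed.

Lemma retract_supp : supp (retract t) `<=` supp t `|` [set v].
Proof. by move=> z /transfer_supp [tz|->]; [left|right]. Qed.

Lemma retract_side : supp (retract t) `<=` X \/ supp (retract t) `<=` Y.
Proof. exact: transfer_side. Qed.

Lemma retract_sum : \sum_(z \in supp (retract t)) retract t z = 1.
Proof.
have [_ _ _ t1] := realization_VR tL.
rewrite (fsum_supp_seq _ lv) //; last by rewrite in_lv; exact: retract_supp.
by rewrite transfer_sum // -t1 (fsum_supp_seq _ lv).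
Qed.

Lemma retract_noncrossing : ~ crossing (supp t) -> retract t = t.
Proof.
move=> nc; apply: transfer_id => //; apply/le_anti.
rewrite [0 <= _]le_min !mass_ge0 //= andbT leNgt; apply/negP.
by case/crossing_of_min_mass_gt0 => // -[x [tx XYx]] [y [ty YXy]]; apply: nc; exists x, y.
Qed.

Lemma retract_close x y : supp (retract t) x -> supp (retract t) y ->
  (d x y <= r%:E)%E.
Proof.
have [_ _ dt _] := realization_VR tL.
have [cS|ncS] := pselect (crossing (supp t)).
  have [_ Lt _] := tL; have [_ _ _ dtv] := VR_setUv Lt cS.
  by move=> /retract_supp sx /retract_supp sy; exact: dtv.
by rewrite retract_noncrossing //; exact: dt.
Qed.

Lemma retract_realization : realization K (retract t).
Proof.
split; [exact: retract_ge0| |exact: retract_sum].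
have fin : finite_set (supp (retract t)).
  by apply: sub_finite_set (finite_fset lv); rewrite in_lv; exact: retract_supp.
by case: retract_side => sXY; [left|right];
  split; by [|exact: supp_neq0 retract_sum|exact: retract_close].
Qed.

Lemma deform_ge0 u z : 0 <= u <= 1 -> 0 <= deform u t z.
Proof.
case/andP=> u0 u1; apply: addr_ge0; apply: mulr_ge0 => //; last exact: retract_ge0.
by rewrite subr_ge0.
Qed.

Lemma deform_supp u : supp (deform u t) `<=` supp t `|` [set v].
Proof.
move=> z dz; have [tz0|tz] := eqVneq (t z) 0; last by left.
apply: (retract_supp z); move: dz; rewrite /supp /deform /= tz0 mulr0 add0r.
by apply: contra_neq => ->; exact: mulr0.
Qed.

Lemma deform_sum u : \sum_(z \in supp (deform u t)) deform u t z = 1.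
Proof.
have [_ _ _ t1] := realization_VR tL.
rewrite (fsum_supp_seq _ lv) //; last by rewrite in_lv; exact: deform_supp.
rewrite /deform big_split /= -!mulr_sumr -(fsum_supp_seq t lv) // t1.
rewrite -(fsum_supp_seq (retract t) lv) ?retract_sum ?mulr1 ?subrK //.
by rewrite in_lv; exact: retract_supp.
Qed.

End OnRealization.

Lemma retract_id (t : Z -> R) : realization K t -> retract t = t.
Proof.
move=> tK; apply: (retract_noncrossing _ (realization_sub VRU_sub tK)).
move: tK => [_ [] [_ _ sXY _] _ [x [y [sx sy [_ nYx] [_ nXy]]]]];
  [exact/nXy/sXY|exact/nYx/sXY].
Qed.

Lemma continuous_retract_on (l : seq Z) :
  continuous (retract_on l : {ptws Z -> R} -> {ptws Z -> R}).
Proof.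
apply: ptws_continuous => z; apply: continuous_transfer.
- exact: continuous_mass.
- exact: continuous_mass.
- exact: proj_continuous.
Qed.

Lemma crossing_subset {S S' : set Z} : S `<=` S' -> crossing S -> crossing S'.
Proof. by move=> SS' [x [y [Sx Sy XYx YXy]]]; exists x, y; split=> //; exact: SS'. Qed.

Lemma retract_on_simplex {S : set Z} {t : Z -> R} : L S -> closed_simplex L S t ->
  retract_on (fset_set (S `|` [set v])) t = retract t.
Proof.
move=> [fS _ _ _] [tL tS]; apply: (retract_onE _ tL); first exact: fset_uniq.
rewrite fset_setK; first by move=> z /tS; left.
by rewrite finite_setU; split=> //; exact: finite_set1.
Qed.

Lemma retract_wopen (U : set (Z -> R)) :
  Defs.wopen K U -> Defs.wopen L (retract @^-1` U).
Proof.
apply: wopen_preimage => [t /retract_realization//|S LS].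
have [cS|ncS] := pselect (crossing S).
  exists ((S `|` [set v]) `&` X), ((S `|` [set v]) `&` Y).
  exists (retract_on (fset_set (S `|` [set v]))); split.
  - by left; exact: VR_setUvI LS cS (proj1 vXY).
  - by right; exact: VR_setUvI LS cS (proj2 vXY).
  - exact: continuous_retract_on.
  move=> t [tL tS]; split; first exact: retract_on_simplex.
  have sv : supp (retract t) `<=` S `|` [set v].
    by move=> z /(retract_supp _ z) [/tS|->]; [left|right].
  by case: (retract_side _ tL) => sXY; [left|right] => z rz;
    (split; [exact: sv|exact: sXY]).
exists S, S, (retract_on (fset_set (S `|` [set v]))).
split; [exact: VR_noncrossing|exact: VR_noncrossing|exact: continuous_retract_on|].
move=> t [tL tS]; split; first exact: retract_on_simplex.
by left; rewrite retract_noncrossing // => /(crossing_subset tS).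
Qed.

Lemma deform0 (t : Z -> R) : deform 0 t = t.
Proof. by apply/funext => z; rewrite /deform subr0 mul1r mul0r addr0. Qed.

Lemma deform1 (t : Z -> R) : deform 1 t = retract t.
Proof. by apply/funext => z; rewrite /deform subrr mul0r add0r mul1r. Qed.

Lemma deform_fix u (t : Z -> R) : retract t = t -> deform u t = t.
Proof. by move=> rt; apply/funext => z; rewrite /deform rt -mulrDl subrK mul1r. Qed.

Lemma deform_simplexwise : simplexwise_homotopy L deform.
Proof.
move=> S LS; pose l := fset_set (S `|` [set v]).
pose Ts (p : R * {ptws Z -> R}) : {ptws Z -> R} :=
  fun z => (1 - p.1) * p.2 z + p.1 * retract_on l p.2 z.
have Ts_cont : continuous Ts.
  apply: ptws_continuous => z.
  have c2 (g : {ptws Z -> R} -> {ptws Z -> R}) : continuous g ->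
      continuous (fun p : R * {ptws Z -> R} => g p.2 z).
    move=> cg [u t].
    apply: (@continuous_comp _ _ _ (g \o snd) (fun t : {ptws Z -> R} => t z)).
      by apply: continuous_comp; [exact: cvg_snd|exact: cg].
    exact: proj_continuous.
  apply: continuous_lerp; last exact: (c2 _ (continuous_retract_on l)).
    by move=> [? ?]; exact: cvg_fst.
  by apply: (c2 id) => x; exact: cvg_id.
have TsE u t : closed_simplex L S t -> Ts (u, t) = deform u t.
  by move=> st; apply/funext => z; rewrite /Ts /deform /= (retract_on_simplex LS st).
have [cS|ncS] := pselect (crossing S).
  exists (S `|` [set v]), Ts; split; [exact: VR_setUv|by []|].
  move=> u t u01 st; split; first exact: TsE.
  have [tL tS] := st; apply: closed_simplex_VR (VR_setUv LS cS) _ (deform_sum _ tL u) _.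
    by move=> z; exact: deform_ge0.
  by move=> z /(deform_supp _ u z) [/tS|->]; [left|right].
exists S, Ts; split=> // u t u01 st; split; first exact: TsE.
rewrite deform_fix //; apply: retract_noncrossing; first exact: st.1.
by move/(crossing_subset st.2).
Qed.

Theorem weak_equiv_VR : weak_equiv K L (@id (Z -> R)).
Proof.
apply: (weak_equiv_retract (phi := retract) (Th := deform)).
- exact: VRU_sub.
- by move=> s s' Ks; exact: VRU_down.
- exact: retract_realization.
- exact: retract_wopen.
- exact: retract_id.
- exact: deform_simplexwise.
- exact: deform0.
- exact: deform1.
- by move=> u t /retract_id; exact: deform_fix.
Qed.

End VRRetraction.

Theorem proposition10p5 (R : realType) (Z : choiceType)
  (d : Z -> Z -> \bar R)
  (d_sym : forall x y, d x y = d y x)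
  (d_refl : forall x, d x x = 0%E)
  (d_ge0 : forall x y, (0 <= d x y)%E)
  (X Y : set Z) (cover : X `|` Y = setT)
  (r : R) (r_ge0 : 0 <= r)
  (v : Z) (vA : (X `&` Y) v)
  (hv : forall x y, (X `\` (X `&` Y)) x -> (Y `\` (X `&` Y)) y ->
          (d x y <= r%:E)%E -> (d x v <= r%:E)%E /\ (d y v <= r%:E)%E)
  (hcase :
     (forall x y, (X `\` (X `&` Y)) x -> (Y `\` (X `&` Y)) y ->
        (d x y <= r%:E)%E ->
        forall w, (X `&` Y) w -> (d w x <= r%:E)%E -> (d w y <= r%:E)%E ->
          (d v w <= r%:E)%E)
     \/ (diam d (X `&` Y) <= r%:E)%E
     \/ X `&` Y = [set v]) :
  @weak_equiv R Z Z (VR d r X `|` VR d r Y) (VR d r setT) (@id (Z -> R)).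
Proof.
rewrite !setDIr !setDv set0U setU0 in hv hcase.
have close_vw : forall x y, (X `\` Y) x -> (Y `\` X) y -> (d x y <= r%:E)%E ->
    forall w, (X `&` Y) w -> (d w x <= r%:E)%E -> (d w y <= r%:E)%E ->
    (d v w <= r%:E)%E.
  case: hcase => [//|[diamA|Av]] x y _ _ _ w Aw _ _.
    by apply: le_trans diamA; apply: ereal_sup_ubound; exists (v, w).
  by move: Aw; rewrite Av => ->; rewrite d_refl lee_fin.
exact: weak_equiv_VR d_sym d_refl r_ge0 cover vA hv close_vw.
Qed.
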